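(* If a simple protocol $\Pi$ with $m$ memory states is not parsimonious, then there exists a parsimonious protocol $\Pi'$ with at most $m$ memory states such that $U^R(\Pi)\le U^R(\Pi')$.
   Context: Setting. The state of nature is $\theta\in\Theta=\{H,L\}$ with prior $\Pr(\theta=H)=p\in(0,1)$. A sender privately observes $\theta$; a receiver does not. $S$ is a finite signal set; conditional on $\theta$, signals are i.i.d. with distribution $\pi_\theta$ on $S$, where $\pi_\theta(s)>0$ for all $s\in S,\theta\in\Theta$, and $\pi_H\neq\pi_L$. The receiver has a finite set of memory states $M$ and chooses a protocol $\Pi=(f,g,a)$: a transition function $f:M\times S\to\Delta(M)$ ($f(i,s)(j)$ is the probability of moving from memory state $i$ to $j$ after signal $s$), an initial distribution $g\in\Delta(M)$ of $m_0$, and an action rule $a:M\to[0,1]$ (probability of action $H$ if the game ends in that memory state). A sender strategy is $\sigma:M\times\Theta\to[0,1]$, the probability of stopping in the current memory state given $\theta$. Timing: $m_0\sim g$; in each period $t=0,1,\dots$, with current memory state $m_t$, the game ends if $m_t$ is absorbing ($f(m_t,s)(m_t)=1$ for all $s$); otherwise the sender stops with probability $\sigma(m_t,\theta)$, ending the game; if not stopped, a signal $s_t\sim\pi_\theta$ is generated and $m_{t+1}\sim f(m_t,s_t)$. When the game ends in state $m_t$ the receiver takes action $H$ with probability $a(m_t)$ and $L$ otherwise. The receiver's payoff is $1$ if the action equals $\theta$ and $0$ otherwise; the sender's payoff is $1$ if the action is $H$ and $0$ otherwise; there is no discounting; if the game never ends both get $0$. $U^S(\Pi,\sigma),U^R(\Pi,\sigma)$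 denote expected payoffs, $\mathrm{br}(\Pi)=\arg\sup_\sigma U^S(\Pi,\sigma)$ is the set of sender best responses, and $U^R(\Pi):=U^R(\Pi,\sigma)$ for $\sigma\in\mathrm{br}(\Pi)$. Since $\pi_\theta$ has full support, which transitions $i\to j$ have positive probability does not depend on $\theta$; the terms absorbing, transient, recurrent communicating class applied to $\Pi$ refer to the Markov chain on $M$ induced by $f$ with signals drawn from $\pi_\theta$ (sender never stopping), and mean the same for both $\theta$. A protocol is simple if it has exactly two absorbing memory states and all other memory states are transient. A protocol is parsimonious if (i) it has exactly two absorbing memory states, one in which $a=0$ and one in which $a=1$, and (ii) all other memory states are transient with $a=0$. *)

From HB Require Import structures.
From mathcomp Require Import all_boot all_order all_algebra.
From mathcomp Require Import all_classical all_reals all_analysis.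
Set Implicit Arguments. Unset Strict Implicit. Unset Printing Implicit Defensive.
Import Order.TTheory GRing.Theory Num.Theory.
Import numFieldNormedType.Exports.
Local Open Scope ring_scope.

(* States of nature: [true] = H, [false] = L.  Memory states: 'I_m. *)

Section Model.
Variables (R : realType) (S : finType).

(* sum of a series of reals (only applied to nonnegative, bounded series) *)
Definition rsum (u : nat -> R) : R := limn (series u).

Definition is_distr (T : finType) (d : T -> R) : Prop :=
  (forall x, 0 <= d x) /\ \sum_(x : T) d x = 1.

Definition valid_env (pi : bool -> S -> R) : Prop :=
  (forall th, is_distr (pi th)) /\ (forall th s, 0 < pi th s) /\
  pi true <> pi false.

Record protocol (m : nat) := Protocol {
  ptrans : 'I_m -> S -> 'I_m -> R;
  pinit  : 'I_m -> R;
  pact   : 'I_m -> R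
}.

Variable pi : bool -> S -> R.

Definition valid_protocol m (P : protocol m) : Prop :=
  (forall i s, is_distr (ptrans P i s)) /\ is_distr (pinit P) /\
  (forall i, 0 <= pact P i <= 1).

Definition absorbing m (P : protocol m) (i : 'I_m) : bool :=
  [forall s, ptrans P i s i == 1].

(* transition matrix of the chain when the sender never stops *)
Definition chainP m (P : protocol m) (th : bool) (i j : 'I_m) : R :=
  \sum_(s : S) pi th s * ptrans P i s j.

(* first-passage vectors from i avoiding i:
   fpass 0 j = P(i,j); fpass (n+1) j = sum_{k <> i} fpass n k * P(k,j).
   Probability of first return to i at time n+1 is fpass n i. *)
Fixpoint fpass m (P : protocol m) th (i : 'I_m) (n : nat) (j : 'I_m) : R :=
  match n with
  | 0 => chainP P th i j
  | n'.+1 => \sum_(k : 'I_m | k != i) fpass P th i n' k * chainP P th k j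
  end.

Definition return_prob m (P : protocol m) th (i : 'I_m) : R :=
  rsum (fun n => fpass P th i n i).

(* transient state: probability of ever returning is < 1
   (the same for both theta by full support; we require it for both) *)
Definition transient m (P : protocol m) (i : 'I_m) : Prop :=
  forall th, return_prob P th i < 1.

Definition simple m (P : protocol m) : Prop :=
  #|[set i | absorbing P i]| = 2%N /\
  (forall i, ~~ absorbing P i -> transient P i).

Definition parsimonious m (P : protocol m) : Prop :=
  #|[set i | absorbing P i]| = 2%N /\
  (exists i0 i1, absorbing P i0 /\ absorbing P i1 /\
      pact P i0 = 0 /\ pact P i1 = 1) /\
  (forall i, ~~ absorbing P i -> transient P i /\ pact P i = 0).

(* sender strategies: sigma(i, theta) = probability of stopping *)
Definition strategy m := 'I_m -> bool -> R.

Definition valid_strategy m (sg : strategy m) : Prop :=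
  forall i th, 0 <= sg i th <= 1.

(* alive mass: probability that the game has not ended before t and m_t = j *)
Fixpoint alive m (P : protocol m) (sg : strategy m) th (t : nat) (j : 'I_m) : R :=
  match t with
  | 0 => pinit P j
  | t'.+1 => \sum_(i : 'I_m | ~~ absorbing P i)
               alive P sg th t' i * (1 - sg i th) * chainP P th i j
  end.

(* probability of ending in state i at a given period, given alive there *)
Definition stopw m (P : protocol m) (sg : strategy m) th (i : 'I_m) : R :=
  if absorbing P i then 1 else sg i th.

Definition endprob m (P : protocol m) (sg : strategy m) th (i : 'I_m) : R :=
  rsum (fun t => alive P sg th t i * stopw P sg th i).

Definition probH m (P : protocol m) (sg : strategy m) th : R :=
  \sum_(i : 'I_m) endprob P sg th i * pact P i.

(* probability of action L (and the game ending) given theta *)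
Definition probL m (P : protocol m) (sg : strategy m) th : R :=
  \sum_(i : 'I_m) endprob P sg th i * (1 - pact P i).

Definition US (p : R) m (P : protocol m) (sg : strategy m) : R :=
  p * probH P sg true + (1 - p) * probH P sg false.

Definition UR (p : R) m (P : protocol m) (sg : strategy m) : R :=
  p * probH P sg true + (1 - p) * probL P sg false.

Definition best_response (p : R) m (P : protocol m) (sg : strategy m) : Prop :=
  valid_strategy sg /\
  forall sg', valid_strategy sg' -> US p P sg' <= US p P sg.

End Model.

(* Let A and B be the two absorbing states of P, sg0 a best response, and s the
   strategy under which the sender stops as the H-type does under sg0, whatever
   the state.  Best responses maximise the probability of action H state by
   state, so the receiver gets at least as much against s as against any best
   response.  All other states being transient, s ends the game almost surely,
   in state i with probabilities e_H(i), e_L(i).  Label i by the receiver's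
   better guess there, H iff (1 - p) e_L(i) <= p e_H(i).  The parsimonious P'
   turns "stop at i" into a move to B or A according to the label of i,
   redirects the absorbing states in the same way, and takes action H only in
   B.  This only slows the chain down on transient states, which thus stay
   transient; never stopping is a best response in P', and under it at least
   the mass labelled H reaches B and the mass labelled L reaches A.  Hence the
   receiver gets at least sum_i max (p e_H(i), (1 - p) e_L(i)) in P', which
   dominates its payoff against s. *)

From HB Require Import structures.
From mathcomp Require Import all_boot all_order all_algebra.
From mathcomp Require Import all_classical all_reals all_analysis.
From mathcomp Require Import ring lra.
Import Order.TTheory GRing.Theory Num.Theory.
Import numFieldNormedType.Exports.
Local Open Scope classical_set_scope.
Local Open Scope ring_scope.
Set Implicit Arguments. Unset Strict Implicit. Unset Printing Implicit Defensive.

Section NonnegSeries.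
Variable R : realType.
Implicit Types u v : R ^nat.

Definition nneg_summable u :=
  (forall n, 0 <= u n) /\ exists B, forall n, series u n <= B.

Lemma series_ord u N : series u N = \sum_(k < N) u k.
Proof. by rewrite seriesEord. Qed.

Lemma nneg_series_nondecreasing u :
  (forall n, 0 <= u n) -> nondecreasing_seq (series u).
Proof. by move=> u0; apply: nondecreasing_series => n _ _; exact: u0. Qed.

Lemma nneg_summable_cvg u : nneg_summable u -> cvgn (series u).
Proof.
move=> [u0 [B uB]]; apply: nondecreasing_is_cvgn.
  exact: nneg_series_nondecreasing.
by exists B => _ [n _ <-]; exact: uB.
Qed.

Lemma series_le_rsum u n : nneg_summable u -> series u n <= rsum u.
Proof.
move=> su; apply: nondecreasing_cvgn_le; last exact: nneg_summable_cvg.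
exact: nneg_series_nondecreasing su.1.
Qed.

Lemma rsum_le u B : nneg_summable u -> (forall n, series u n <= B) -> rsum u <= B.
Proof.
move=> su uB; apply: (cvgr_to_le (nneg_summable_cvg su)).
by near=> n; exact: uB.
Unshelve. all: by end_near. Qed.

Lemma rsum_ge0 u : nneg_summable u -> 0 <= rsum u.
Proof.
by move=> su; apply: le_trans (series_le_rsum 0 su); rewrite series_ord big_ord0.
Qed.

Lemma le_rsum_shift u v k : nneg_summable u -> nneg_summable v ->
  (forall N, series u N <= series v (N + k)%N) -> rsum u <= rsum v.
Proof.
move=> su sv uv; apply: rsum_le => // N.
exact: le_trans (uv N) (series_le_rsum _ sv).
Qed.

Lemma ler_rsum u v : nneg_summable u -> nneg_summable v ->
  (forall n, u n <= v n) -> rsum u <= rsum v.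
Proof. by move=> /nneg_summable_cvg cu /nneg_summable_cvg cv; exact: lim_series_le. Qed.

Lemma nneg_summable_le u v : nneg_summable v ->
  (forall n, 0 <= u n) -> (forall n, u n <= v n) -> nneg_summable u.
Proof.
move=> [_ [B vB]] u0 uv; split => //; exists B => n; apply: le_trans (vB n).
by apply: ler_sum => i _; exact: uv.
Qed.

Lemma nneg_summable_cvg0 u : nneg_summable u -> u @ \oo --> 0.
Proof. by move/nneg_summable_cvg; exact: cvg_series_cvg_0. Qed.

Lemma cvg_sum (I : Type) (r : seq I) (P : pred I) (u : I -> R ^nat) (l : I -> R) :
  (forall i, u i @ \oo --> l i) ->
  (fun n => \sum_(i <- r | P i) u i n) @ \oo --> \sum_(i <- r | P i) l i.
Proof. by move=> ul; apply: cvg_big => [|i _]; [exact: add_continuous|exact: ul]. Qed.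

Section FiniteSums.
Variables (I : finType) (P : pred I) (u : I -> R ^nat).

Lemma series_sum n :
  series (fun t => \sum_(i | P i) u i t) n = \sum_(i | P i) series (u i) n.
Proof. by rewrite /series /= exchange_big. Qed.

Hypothesis su : forall i, nneg_summable (u i).

Lemma nneg_summable_sum : nneg_summable (fun t => \sum_(i | P i) u i t).
Proof.
split; first by move=> n; apply: sumr_ge0 => i _; exact: (su i).1.
exists (\sum_(i | P i) rsum (u i)) => n; rewrite series_sum.
by apply: ler_sum => i _; exact: series_le_rsum.
Qed.

Lemma rsum_sum : rsum (fun t => \sum_(i | P i) u i t) = \sum_(i | P i) rsum (u i).
Proof.
apply: cvg_lim => //; rewrite (funext series_sum).
by apply: cvg_sum => i; exact: nneg_summable_cvg.
Qed.

End FiniteSums.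

Lemma nneg_summable_mulr u c : nneg_summable u -> 0 <= c ->
  nneg_summable (fun t => u t * c).
Proof.
move=> [u0 [B uB]] c0; split => [n|]; first by rewrite mulr_ge0.
by exists (B * c) => n; rewrite /series /= -big_distrl ler_wpM2r //; exact: uB.
Qed.

Lemma rsum_mulr u c : nneg_summable u -> rsum (fun t => u t * c) = rsum u * c.
Proof.
move=> su; apply: cvg_lim => //.
have -> : series (fun t => u t * c) = fun n => series u n * c.
  by apply: funext => n; rewrite !series_ord big_distrl.
exact: cvgMr_tmp (nneg_summable_cvg su).
Qed.

Lemma sum_convolution (a b : R ^nat) N :
  \sum_(n < N) \sum_(k < n.+1) a k * b (n - k)%N =
  \sum_(k < N) a k * series b (N - k)%N.
Proof.
elim: N => [|N IH]; first by rewrite !big_ord0.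
rewrite big_ord_recr /= IH.
have -> : \sum_(k < N.+1) a k * series b (N.+1 - k)%N =
   \sum_(k < N.+1) (a k * series b (N - k)%N + a k * b (N - k)%N).
  by apply: eq_bigr => k _; rewrite subSn -1?ltnS // seriesSr mulrDr.
rewrite big_split /=; congr (_ + _).
by rewrite [RHS]big_ord_recr /= subnn [series b 0]series_ord big_ord0 mulr0 addr0.
Qed.

End NonnegSeries.

Section Protocols.
Variables (R : realType) (S : finType) (pi : bool -> S -> R).
Hypothesis env : valid_env pi.

Lemma pi_ge0 th s : 0 <= pi th s.
Proof. exact: (env.1 th).1. Qed.

Lemma pi_sum1 th : \sum_s pi th s = 1.
Proof. exact: (env.1 th).2. Qed.

Lemma strategy_ge0 m (sg : strategy R m) i th : valid_strategy sg -> 0 <= sg i th.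
Proof. by move=> /(_ i th) /andP[]. Qed.

Lemma strategy_le1 m (sg : strategy R m) i th : valid_strategy sg -> sg i th <= 1.
Proof. by move=> /(_ i th) /andP[]. Qed.

Definition never_stop m : strategy R m := fun _ _ => 0.

Lemma never_stop_valid m : valid_strategy (@never_stop m).
Proof. by move=> i th; rewrite lexx ler01. Qed.

Section Chain.
Variables (m : nat) (Q : protocol R S m).
Hypothesis hQ : valid_protocol Q.

Lemma ptrans_ge0 i s j : 0 <= ptrans Q i s j.
Proof. exact: (hQ.1 i s).1. Qed.

Lemma ptrans_sum1 i s : \sum_j ptrans Q i s j = 1.
Proof. exact: (hQ.1 i s).2. Qed.

Lemma pinit_ge0 j : 0 <= pinit Q j.
Proof. exact: hQ.2.1.1. Qed.

Lemma pinit_sum1 : \sum_j pinit Q j = 1.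
Proof. exact: hQ.2.1.2. Qed.

Lemma chainP_ge0 th i j : 0 <= chainP pi Q th i j.
Proof. by apply: sumr_ge0 => s _; rewrite mulr_ge0 ?pi_ge0 ?ptrans_ge0. Qed.

Lemma chainP_sum1 th i : \sum_j chainP pi Q th i j = 1.
Proof.
rewrite /chainP exchange_big /= -(pi_sum1 th); apply: eq_bigr => s _.
by rewrite -mulr_sumr ptrans_sum1 mulr1.
Qed.

Lemma ptrans_absorbing i s j : absorbing Q i -> ptrans Q i s j = (j == i)%:R.
Proof.
move=> /forallP /(_ s) /eqP Qii.
have [->|ji] := eqVneq j i; first by rewrite Qii.
have := ptrans_sum1 i s; rewrite (bigD1 i) //= Qii -[RHS]addr0 => /addrI.
by move=> /psumr_eq0P; apply => // k _; exact: ptrans_ge0.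
Qed.

Lemma chainP_absorbing th i j : absorbing Q i -> chainP pi Q th i j = (j == i)%:R.
Proof.
move=> Qi; rewrite /chainP; under eq_bigr do rewrite ptrans_absorbing //.
by rewrite -mulr_suml pi_sum1 mul1r.
Qed.

Section Visits.
Variable th : bool.
Local Notation ch := (chainP pi Q th).

Definition push (x : 'I_m -> R) : 'I_m -> R := fun l => \sum_k x k * ch k l.

Definition evolve x n := iter n push x.

(* [taboo x j n l]: mass started from [x] that is at [l] at time [n] without
   having visited [j] at the times [0, ..., n - 1]. *)
Fixpoint taboo (x : 'I_m -> R) (j : 'I_m) n : 'I_m -> R :=
  if n is n'.+1 then fun l => \sum_(k | k != j) taboo x j n' k * ch k l else x.

Definition dirac (j : 'I_m) : 'I_m -> R := fun l => (l == j)%:R.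

Definition occupation j n := evolve (dirac j) n j.

Lemma evolve_ge0 x n l : (forall i, 0 <= x i) -> 0 <= evolve x n l.
Proof.
move=> x0; elim: n l => [|n IH] l //=.
by apply: sumr_ge0 => i _; rewrite mulr_ge0 ?chainP_ge0 ?IH.
Qed.

Lemma taboo_ge0 x j n l : (forall i, 0 <= x i) -> 0 <= taboo x j n l.
Proof.
move=> x0; elim: n l => [|n IH] l //=.
by apply: sumr_ge0 => i _; rewrite mulr_ge0 ?chainP_ge0 ?IH.
Qed.

Lemma dirac_ge0 j i : 0 <= dirac j i.
Proof. exact: ler0n. Qed.

Lemma evolve_dirac1 j : evolve (dirac j) 1 = ch j.
Proof.
apply: funext => l; rewrite /= /push (bigD1 j) //= /dirac eqxx mul1r big1 ?addr0 //.
by move=> i /negbTE ->; rewrite mul0r.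
Qed.

Lemma evolve_row j n : evolve (ch j) n = evolve (dirac j) n.+1.
Proof. by rewrite -evolve_dirac1 /evolve -iterSr. Qed.

Lemma evolve_first_visit x j n l : evolve x n l =
  taboo x j n l + \sum_(k < n) taboo x j k j * evolve (dirac j) (n - k)%N l.
Proof.
elim: n l => [|n IH] l; first by rewrite big_ord0 addr0.
rewrite [LHS]/= -/(evolve x n) /push.
under eq_bigr do rewrite IH mulrDl.
rewrite big_split /=.
have -> : \sum_i (\sum_(k < n) taboo x j k j * evolve (dirac j) (n - k)%N i) * ch i l =
    \sum_(k < n) taboo x j k j * evolve (dirac j) (n.+1 - k)%N l.
  under eq_bigr do rewrite big_distrl /=.
  rewrite exchange_big /=; apply: eq_bigr => k _.
  rewrite subSn 1?ltnW // /= /push mulr_sumr.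
  by apply: eq_bigr => i _; rewrite mulrA.
rewrite (bigD1 j) //= [in RHS]big_ord_recr /= subSnn evolve_dirac1; ring.
Qed.

Lemma taboo_mass x j N : (forall i, 0 <= x i) ->
  \sum_(k < N) taboo x j k j + \sum_l taboo x j N l = \sum_l x l.
Proof.
move=> x0; elim: N => [|N IH]; first by rewrite big_ord0 add0r.
rewrite big_ord_recr /= -IH -addrA; congr (_ + _).
rewrite exchange_big /=.
under eq_bigr do rewrite -mulr_sumr chainP_sum1 mulr1.
by rewrite [RHS](bigD1 j) //= addrC.
Qed.

Lemma sum_taboo_le x j N : (forall i, 0 <= x i) ->
  \sum_(k < N) taboo x j k j <= \sum_l x l.
Proof.
move=> x0; rewrite -(taboo_mass j N x0) lerDl.
by apply: sumr_ge0 => l _; exact: taboo_ge0.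
Qed.

Lemma sum_evolve_visits x j N : (forall i, 0 <= x i) ->
  \sum_(n < N) evolve x n j =
  \sum_(k < N) taboo x j k j * series (occupation j) (N - k)%N.
Proof.
move=> x0; rewrite -(sum_convolution (fun k => taboo x j k j)); apply: eq_bigr => n _.
rewrite (evolve_first_visit x j) big_ord_recr /= subnn.
by rewrite /occupation /= /dirac eqxx mulr1 addrC.
Qed.

Lemma taboo_fpass j n : taboo (ch j) j n = fpass pi Q th j n.
Proof. by elim: n => [|n IH] //=; rewrite IH. Qed.

Lemma nneg_summable_fpass j : nneg_summable (fun n => fpass pi Q th j n j).
Proof.
have ch0 := chainP_ge0 th j.
split=> [n|]; first by rewrite -taboo_fpass; exact: taboo_ge0.
exists 1 => N; rewrite series_ord; under eq_bigr do rewrite -taboo_fpass.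
by rewrite -(chainP_sum1 th j); exact: sum_taboo_le.
Qed.

Lemma occupation_ge0 j n : 0 <= occupation j n.
Proof. exact: evolve_ge0 (dirac_ge0 j). Qed.

Lemma series_occupation_ge0 j N : 0 <= series (occupation j) N.
Proof. by rewrite series_ord; apply: sumr_ge0 => n _; exact: occupation_ge0. Qed.

(* A visit to [j] after time 0 is a first return followed by a fresh start. *)
Lemma series_occupation_succ j N :
  series (occupation j) N.+1 <= 1 + return_prob pi Q th j * series (occupation j) N.
Proof.
have mono := nneg_series_nondecreasing (occupation_ge0 j).
rewrite [leLHS]series_ord big_ord_recl.
have -> : occupation j 0 = 1 by rewrite /occupation /= /dirac eqxx.
rewrite lerD2l.
have -> : \sum_(i < N) occupation j (bump 0 i) = \sum_(n < N) evolve (ch j) n j.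
  by apply: eq_bigr => i _; rewrite /bump /= add1n evolve_row.
rewrite (sum_evolve_visits j N (chainP_ge0 th j)).
apply: le_trans (_ : \sum_(k < N) taboo (ch j) j k j * series (occupation j) N <= _).
  apply: ler_sum => k _; apply: ler_wpM2l; first exact: taboo_ge0 (chainP_ge0 th j).
  by apply: mono; exact: leq_subr.
rewrite -big_distrl /= ler_wpM2r ?series_occupation_ge0 //.
under eq_bigr do rewrite taboo_fpass.
rewrite -(series_ord (fun k => fpass pi Q th j k j)).
exact: series_le_rsum (nneg_summable_fpass j).
Qed.

Lemma series_occupation_le j N : return_prob pi Q th j < 1 ->
  series (occupation j) N <= (1 - return_prob pi Q th j)^-1.
Proof.
set r := return_prob pi Q th j => r1.
have ab := nneg_series_nondecreasing (occupation_ge0 j) (leqnSn N).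
have b1 : _ <= 1 + r * _ := series_occupation_succ j N.
rewrite -[leRHS]div1r ler_pdivlMr ?subr_gt0 //.
lra.
Qed.

Lemma nneg_summable_evolve x j : (forall i, 0 <= x i) -> \sum_l x l <= 1 ->
  return_prob pi Q th j < 1 -> nneg_summable (fun n => evolve x n j).
Proof.
move=> x0 x1 r1; split=> [n|]; first exact: evolve_ge0.
exists (1 - return_prob pi Q th j)^-1 => N.
rewrite series_ord (sum_evolve_visits j N x0).
apply: le_trans (_ : \sum_(k < N) taboo x j k j * (1 - return_prob pi Q th j)^-1 <= _).
  apply: ler_sum => k _; rewrite ler_wpM2l ?taboo_ge0 //; exact: series_occupation_le.
rewrite -big_distrl /= -[leRHS]mul1r ler_wpM2r ?invr_ge0 ?subr_ge0 ?(ltW r1) //.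
exact: le_trans (sum_taboo_le j N x0) x1.
Qed.

End Visits.

Section Play.
Variable sg : strategy R m.
Hypothesis hsg : valid_strategy sg.

Lemma stopw_ge0 th i : 0 <= stopw Q sg th i.
Proof. by rewrite /stopw; case: ifP => // _; exact: strategy_ge0. Qed.

Lemma alive_ge0 th t j : 0 <= alive pi Q sg th t j.
Proof.
elim: t j => [|t IH] j /=; first exact: pinit_ge0.
apply: sumr_ge0 => i _; rewrite !mulr_ge0 ?chainP_ge0 ?IH // subr_ge0.
exact: strategy_le1.
Qed.

Lemma alive_le_never_stop th t j :
  alive pi Q sg th t j <= alive pi Q (@never_stop m) th t j.
Proof.
elim: t j => [|t IH] j //=.
apply: ler_sum => i _; rewrite subr0 mulr1 ler_wpM2r ?chainP_ge0 //.
apply: le_trans (IH i); rewrite ler_piMr ?alive_ge0 // lerBlDr lerDl.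
exact: strategy_ge0.
Qed.

Lemma alive_le_evolve th t j : alive pi Q sg th t j <= evolve th (pinit Q) t j.
Proof.
elim: t j => [|t IH] j //=.
rewrite big_mkcond /=; apply: ler_sum => i _; case: ifP => _.
  apply: ler_wpM2r; first exact: chainP_ge0.
  apply: le_trans (IH i); rewrite ler_piMr ?alive_ge0 // lerBlDr lerDl.
  exact: strategy_ge0.
by rewrite mulr_ge0 ?chainP_ge0 ?evolve_ge0 //; exact: pinit_ge0.
Qed.

Definition stop_mass th t := \sum_i alive pi Q sg th t i * stopw Q sg th i.

Lemma alive_mass_succ th t :
  \sum_j alive pi Q sg th t.+1 j = \sum_j alive pi Q sg th t j - stop_mass th t.
Proof.
rewrite /= exchange_big /=.
under eq_bigr do rewrite -mulr_sumr chainP_sum1 mulr1.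
rewrite /stop_mass [in RHS](bigID (@absorbing _ _ _ Q)) /=.
rewrite [X in _ - X](bigID (@absorbing _ _ _ Q)) /= opprD addrACA -!sumrB.
rewrite [X in _ = X + _]big1 ?add0r => [|i Qi]; last by rewrite /stopw Qi mulr1 subrr.
by apply: eq_bigr => i /negbTE Qi; rewrite /stopw Qi mulrBr mulr1.
Qed.

Lemma stop_mass_conservation th N :
  series (stop_mass th) N + \sum_j alive pi Q sg th N j = 1.
Proof.
elim: N => [|N IH]; first by rewrite series_ord big_ord0 add0r pinit_sum1.
by rewrite seriesSr alive_mass_succ -IH; ring.
Qed.

Lemma nneg_summable_stop_mass th : nneg_summable (stop_mass th).
Proof.
split=> [t|]; first by apply: sumr_ge0 => i _; rewrite mulr_ge0 ?alive_ge0 ?stopw_ge0.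
exists 1 => N; rewrite -(stop_mass_conservation th N) lerDl.
by apply: sumr_ge0 => j _; exact: alive_ge0.
Qed.

Lemma nneg_summable_stopped_at th i :
  nneg_summable (fun t => alive pi Q sg th t i * stopw Q sg th i).
Proof.
apply: nneg_summable_le (nneg_summable_stop_mass th) _ _ => t.
  by rewrite mulr_ge0 ?alive_ge0 ?stopw_ge0.
rewrite /stop_mass (bigD1 i) //= lerDl; apply: sumr_ge0 => k _.
by rewrite mulr_ge0 ?alive_ge0 ?stopw_ge0.
Qed.

Lemma nneg_summable_alive_absorbing th j : absorbing Q j ->
  nneg_summable (fun t => alive pi Q sg th t j).
Proof.
move=> Qj; have := nneg_summable_stopped_at th j.
by rewrite /stopw Qj; under eq_fun do rewrite mulr1.
Qed.

Lemma endprob_ge0 th i : 0 <= endprob pi Q sg th i.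
Proof. exact: rsum_ge0 (nneg_summable_stopped_at th i). Qed.

Lemma sum_endprob th : \sum_i endprob pi Q sg th i = rsum (stop_mass th).
Proof. by rewrite /endprob -rsum_sum // => i; exact: nneg_summable_stopped_at. Qed.

Lemma sum_endprob_le1 th : \sum_i endprob pi Q sg th i <= 1.
Proof.
rewrite sum_endprob; apply: rsum_le; first exact: nneg_summable_stop_mass.
by move=> N; rewrite -(stop_mass_conservation th N) lerDl; apply: sumr_ge0 => j _;
  exact: alive_ge0.
Qed.

(* Mass only lingers in transient states, where its total over time is finite;
   hence the alive mass vanishes and the game ends almost surely. *)
Lemma sum_endprob_transient th :
  (forall j, ~~ absorbing Q j -> return_prob pi Q th j < 1) ->
  \sum_i endprob pi Q sg th i = 1.
Proof.
move=> Qtr; rewrite sum_endprob; apply: cvg_lim => //.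
have -> : series (stop_mass th) = fun N => 1 - \sum_j alive pi Q sg th N j.
  by apply: funext => N; rewrite -(stop_mass_conservation th N) addrK.
rewrite -[X in _ --> X]subr0; apply: cvgB; first exact: cvg_cst.
suff alive0 j : (fun N => alive pi Q sg th N j) @ \oo --> 0.
  by have := @cvg_sum _ _ (index_enum 'I_m) xpredT _ _ alive0; rewrite big1.
have [Qj|Qj] := boolP (absorbing Q j).
  exact: nneg_summable_cvg0 (nneg_summable_alive_absorbing th Qj).
apply: (@squeeze_cvgr _ _ _ _ (fun _ => 0) (fun n => evolve th (pinit Q) n j)).
- by near=> n; rewrite alive_ge0 alive_le_evolve.
- exact: cvg_cst.
apply/nneg_summable_cvg0/nneg_summable_evolve; last exact: Qtr.
  exact: pinit_ge0.
by rewrite pinit_sum1.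
Unshelve. all: by end_near.
Qed.

Definition lose_mass th t :=
  \sum_i alive pi Q sg th t i * stopw Q sg th i * (1 - pact Q i).

Lemma nneg_summable_lost_at th i :
  nneg_summable (fun t => alive pi Q sg th t i * stopw Q sg th i * (1 - pact Q i)).
Proof.
apply: nneg_summable_mulr; first exact: nneg_summable_stopped_at.
by rewrite subr_ge0; case/andP: (hQ.2.2 i).
Qed.

Lemma nneg_summable_lose_mass th : nneg_summable (lose_mass th).
Proof. exact: nneg_summable_sum (nneg_summable_lost_at th). Qed.

Lemma probL_rsum th : probL pi Q sg th = rsum (lose_mass th).
Proof.
rewrite /lose_mass rsum_sum => [|i]; last exact: nneg_summable_lost_at.
by apply: eq_bigr => i _; rewrite rsum_mulr //; exact: nneg_summable_stopped_at.
Qed.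

End Play.

Lemma alive_eq_state (s1 s2 : strategy R m) th : (forall i, s1 i th = s2 i th) ->
  alive pi Q s1 th = alive pi Q s2 th.
Proof.
move=> s12; apply: funext => t; elim: t => [|t IH] //=; apply: funext => j.
by apply: eq_bigr => i _; rewrite IH s12.
Qed.

Lemma probH_eq_state (s1 s2 : strategy R m) th : (forall i, s1 i th = s2 i th) ->
  probH pi Q s1 th = probH pi Q s2 th.
Proof.
move=> s12; rewrite /probH /endprob (alive_eq_state s12) /stopw.
by apply: eq_bigr => i _; under eq_fun do rewrite s12.
Qed.

Definition splice (sH sL : strategy R m) : strategy R m :=
  fun i th => if th then sH i true else sL i false.

Lemma splice_valid sH sL : valid_strategy sH -> valid_strategy sL ->
  valid_strategy (splice sH sL).
Proof. by move=> vH vL i [] /=. Qed.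

(* Splicing [s] into [sg] in one state shows that a best response is optimal
   state by state. *)
Lemma best_response_probH p sg s th : 0 < p < 1 -> best_response pi p Q sg ->
  valid_strategy s -> probH pi Q s th <= probH pi Q sg th.
Proof.
move=> /andP[p0 p1] [vsg sgbest] vs; case: th.
- have := sgbest _ (splice_valid vs vsg); rewrite /US.
  rewrite (@probH_eq_state _ s true) // (@probH_eq_state _ sg false) //.
  by rewrite lerD2r ler_pM2l.
- have := sgbest _ (splice_valid vsg vs); rewrite /US.
  rewrite (@probH_eq_state _ sg true) // (@probH_eq_state _ s false) //.
  by rewrite lerD2l ler_pM2l // subr_gt0.
Qed.

Section SingleWinState.
Variable B : 'I_m.
Hypothesis QB : absorbing Q B.
Hypothesis actB : forall i, pact Q i = (i == B)%:R.

Lemma probH_single_win s th : probH pi Q s th = rsum (fun t => alive pi Q s th t B).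
Proof.
rewrite /probH (bigD1 B) //= actB eqxx mulr1 big1 => [|i /negbTE iB].
  by rewrite addr0 /endprob /stopw QB; under eq_fun do rewrite mulr1.
by rewrite actB iB mulr0.
Qed.

Lemma probH_le_never_stop s th : valid_strategy s ->
  probH pi Q s th <= probH pi Q (@never_stop m) th.
Proof.
move=> vs; rewrite !probH_single_win; apply: ler_rsum => [||t].
- exact: nneg_summable_alive_absorbing.
- exact: nneg_summable_alive_absorbing (@never_stop_valid m) _ _ QB.
- exact: alive_le_never_stop.
Qed.

Lemma best_response_never_stop p : 0 < p < 1 -> best_response pi p Q (@never_stop m).
Proof.
move=> /andP[p0 p1]; split=> [|s vs]; first exact: never_stop_valid.
rewrite /US lerD // ler_wpM2l ?subr_ge0 ?(ltW p0) ?(ltW p1) //;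
  exact: probH_le_never_stop.
Qed.

Lemma lose_mass_single_win s th t :
  lose_mass s th t = stop_mass s th t - alive pi Q s th t B.
Proof.
rewrite /lose_mass /stop_mass (bigD1 B) //= [in RHS](bigD1 B) //= actB eqxx.
rewrite /stopw QB subrr !mulr0 mulr1 add0r addrC addrK.
by apply: eq_bigr => i /negbTE iB; rewrite actB iB subr0 mulr1.
Qed.

Lemma probL_never_stop_le s th : valid_strategy s ->
  probL pi Q (@never_stop m) th <= probL pi Q s th.
Proof.
have v0 := @never_stop_valid m; move=> vs.
have series_lose s' N : series (lose_mass s' th) N =
    1 - \sum_j alive pi Q s' th N j - series (fun t => alive pi Q s' th t B) N.
  rewrite -(stop_mass_conservation s' th N) addrK !series_ord -sumrB.
  by apply: eq_bigr => t _; rewrite lose_mass_single_win.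
rewrite !probL_rsum //; apply: (le_rsum_shift (k := 0)) => [||N];
  try exact: nneg_summable_lose_mass.
rewrite addn0 !series_lose lerB ?lerB //; apply: ler_sum => *;
  exact: alive_le_never_stop.
Qed.

End SingleWinState.

End Chain.

Definition stop_with m (sig : 'I_m -> R) : strategy R m := fun i _ => sig i.

Lemma stop_with_valid m (sig : 'I_m -> R) :
  (forall i, 0 <= sig i <= 1) -> valid_strategy (stop_with sig).
Proof. by move=> sig01 i th; exact: sig01. Qed.

Section Parsimonize.
Variables (m : nat) (P : protocol R S m).
Hypothesis hP : valid_protocol P.
Variables A B : 'I_m.
Hypotheses (PA : absorbing P A) (PB : absorbing P B) (AB : A != B).
Variable sig : 'I_m -> R.
Hypothesis sig01 : forall i, 0 <= sig i <= 1.
Variable lab : 'I_m -> bool.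

Definition target (x : bool) := if x then B else A.

Definition route l := if absorbing P l then target (lab l) else l.

(* The sender's stop at a non-absorbing state [k] (probability [sig k]) becomes
   a move to [target (lab k)]. *)
Definition pars_protocol : protocol R S m := Protocol
  (fun k s j => if absorbing P k then (j == k)%:R else
     sig k * (j == target (lab k))%:R +
     (1 - sig k) * \sum_(l | route l == j) ptrans P k s l)
  (fun j => \sum_(l | route l == j) pinit P l)
  (fun j => (j == B)%:R).

Local Notation P' := pars_protocol.

Lemma sig_ge0 i : 0 <= sig i. Proof. by case/andP: (sig01 i). Qed.
Lemma sig_le1 i : sig i <= 1. Proof. by case/andP: (sig01 i). Qed.

Lemma target_absorbing x : absorbing P (target x). Proof. by case: x. Qed.

Lemma target_inj x y : (target x == target y) = (x == y).
Proof. by case: x; case: y; rewrite /= ?eqxx ?(negbTE AB) // eq_sym (negbTE AB). Qed.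

Lemma nonabsorbing_neq_target j x : ~~ absorbing P j -> (j == target x) = false.
Proof. by move=> Pj; apply/negbTE/eqP => jx; move: Pj; rewrite jx target_absorbing. Qed.

Lemma sum_route (f : 'I_m -> R) : \sum_j \sum_(l | route l == j) f l = \sum_l f l.
Proof.
rewrite (exchange_big_dep xpredT) //=; apply: eq_bigr => l _.
by rewrite (big_pred1 (route l)) // => j; rewrite /= eq_sym.
Qed.

Lemma sum_route_nonabsorbing j (f : 'I_m -> R) : ~~ absorbing P j ->
  \sum_(l | route l == j) f l = f j.
Proof.
move=> Pj; rewrite (big_pred1 j) // => l /=; rewrite /route; case: ifP => // Pl.
by rewrite eq_sym nonabsorbing_neq_target //; apply/esym/eqP => lj; rewrite -lj Pl in Pj.
Qed.

Lemma route_target x l : (route l == target x) = absorbing P l && (lab l == x).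
Proof.
rewrite /route; case: ifP => Pl; first exact: target_inj.
by rewrite nonabsorbing_neq_target ?Pl.
Qed.

Lemma pars_valid : valid_protocol P'.
Proof.
split; [move=> k s; split=> [j|] /= | split=> [|i] /=].
- case: ifP => _; first exact: ler0n.
  rewrite addr_ge0 ?mulr_ge0 ?sig_ge0 ?subr_ge0 ?sig_le1 //.
  by apply: sumr_ge0 => l _; exact: ptrans_ge0.
- case: (absorbing P k) => /=.
    by rewrite (bigD1 k) //= eqxx big1 ?addr0 // => j /negbTE ->.
  rewrite big_split /= -!mulr_sumr sum_route ptrans_sum1 // (bigD1 (target (lab k))) //=.
  by rewrite eqxx big1 ?addr0 => [|j /negbTE ->]; rewrite ?mulr1 ?subrKC.
- split=> [j|]; last by rewrite sum_route pinit_sum1.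
  by apply: sumr_ge0 => l _; exact: pinit_ge0.
- by rewrite ler0n lern1 leq_b1.
Qed.

Lemma pars_absorbing k : absorbing P' k = absorbing P k.
Proof.
have [Pk|Pk] := boolP (absorbing P k); first by apply/forallP => s; rewrite /= Pk eqxx.
apply: negbTE; apply/negP => /forallP P'k; have /negP := Pk; apply; apply/forallP => s.
have := P'k s; rewrite /= (negbTE Pk) nonabsorbing_neq_target // mulr0 add0r.
rewrite sum_route_nonabsorbing // => /eqP P'kk.
have Pkk1 : ptrans P k s k <= 1.
  rewrite -(ptrans_sum1 hP k s) (bigD1 k) //= lerDl.
  by apply: sumr_ge0 => l _; exact: ptrans_ge0.
have := ptrans_ge0 hP k s k; have := sig_ge0 k; have := sig_le1 k.
by move=> *; apply/eqP; nra.
Qed.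

Lemma chainP_pars th k j : ~~ absorbing P k ->
  chainP pi P' th k j = sig k * (j == target (lab k))%:R +
     (1 - sig k) * \sum_(l | route l == j) chainP pi P th k l.
Proof.
move=> Pk; rewrite /chainP /= (negbTE Pk); under eq_bigr do rewrite mulrDr.
rewrite big_split /= -big_distrl /= pi_sum1 mul1r; congr (_ + _).
rewrite [in RHS]exchange_big /= mulr_sumr; apply: eq_bigr => s _.
by rewrite mulrCA mulr_sumr.
Qed.

Lemma chainP_pars_nonabsorbing th k j : ~~ absorbing P k -> ~~ absorbing P j ->
  chainP pi P' th k j = (1 - sig k) * chainP pi P th k j.
Proof.
move=> Pk Pj.
by rewrite chainP_pars // nonabsorbing_neq_target // mulr0 add0r sum_route_nonabsorbing.
Qed.

Lemma fpass_ge0 m' (Q : protocol R S m') th k n j : valid_protocol Q ->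
  0 <= fpass pi Q th k n j.
Proof.
by move=> hQ; rewrite -taboo_fpass; apply: taboo_ge0 => // i; exact: chainP_ge0.
Qed.

(* Slowing the chain down by [1 - sig] on the non-absorbing states can only
   lower the first-return probabilities. *)
Lemma fpass_pars_le th k n j : ~~ absorbing P k -> ~~ absorbing P j ->
  fpass pi P' th k n j <= fpass pi P th k n j.
Proof.
have damp l l' : ~~ absorbing P l -> ~~ absorbing P l' ->
    chainP pi P' th l l' <= chainP pi P th l l'.
  move=> Pl Pl'; rewrite chainP_pars_nonabsorbing // ler_piMl ?chainP_ge0 //.
  by rewrite lerBlDr lerDl sig_ge0.
move=> Pk; elim: n j => [|n IH] j Pj /=; first exact: damp.
apply: ler_sum => l _; have [Pl|Pl] := boolP (absorbing P l).
  rewrite (chainP_absorbing pars_valid) ?pars_absorbing //.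
  have /negbTE -> : j != l by apply: contraNneq Pj => ->.
  by rewrite mulr0 mulr_ge0 ?fpass_ge0 ?chainP_ge0.
apply: ler_pM; rewrite ?fpass_ge0 ?chainP_ge0 ?IH ?damp //; exact: pars_valid.
Qed.

Lemma pars_transient k : ~~ absorbing P k -> transient pi P k -> transient pi P' k.
Proof.
move=> Pk Ptr th; apply: le_lt_trans (Ptr th); apply: ler_rsum => [||n].
- exact: nneg_summable_fpass pars_valid th k.
- exact: nneg_summable_fpass.
- exact: fpass_pars_le.
Qed.

Lemma pars_parsimonious : #|[set i | absorbing P i]%SET| = 2%N ->
  (forall i, ~~ absorbing P i -> transient pi P i) -> parsimonious pi P'.
Proof.
move=> Pcard Ptr; split; [|split].
- by rewrite -Pcard; apply: eq_card => i; rewrite !inE pars_absorbing.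
- by exists A, B; rewrite !pars_absorbing PA PB /= eqxx (negbTE AB).
- move=> i; rewrite pars_absorbing => Pi; split; first exact: pars_transient (Ptr i Pi).
  by rewrite /= (nonabsorbing_neq_target true Pi).
Qed.

Local Notation zs := (@never_stop m).
Local Notation s := (stop_with sig).

Lemma alive_pars_succ th t :
  (forall i, ~~ absorbing P i -> alive pi P' zs th t i = alive pi P s th t i) ->
  forall j, alive pi P' zs th t.+1 j =
    \sum_(i | ~~ absorbing P i) alive pi P s th t i * sig i * (j == target (lab i))%:R +
    \sum_(l | route l == j) alive pi P s th t.+1 l.
Proof.
move=> IH j /=; rewrite (eq_bigl (fun i => ~~ absorbing P i)) => [|i]; last first.
  by rewrite pars_absorbing.
rewrite exchange_big /= -big_split /=; apply: eq_bigr => i Pi.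
rewrite IH // chainP_pars // /never_stop subr0 mulr1 mulrDr mulrA mulr_sumr.
by congr (_ + _); rewrite mulr_sumr; apply: eq_bigr => l _; rewrite !mulrA.
Qed.

Lemma alive_pars_nonabsorbing th t j : ~~ absorbing P j ->
  alive pi P' zs th t j = alive pi P s th t j.
Proof.
elim: t j => [|t IH] j Pj; first by rewrite /= sum_route_nonabsorbing.
rewrite alive_pars_succ // big1 ?add0r ?sum_route_nonabsorbing // => i _.
by rewrite nonabsorbing_neq_target // mulr0.
Qed.

Lemma alive_pars_target0 th x : alive pi P' zs th 0 (target x) =
  \sum_(l | (lab l == x) && absorbing P l) alive pi P s th 0 l.
Proof. by apply: eq_bigl => l; rewrite route_target andbC. Qed.

Lemma alive_pars_target_succ th t x : alive pi P' zs th t.+1 (target x) =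
  \sum_(i | (lab i == x) && ~~ absorbing P i) alive pi P s th t i * sig i +
  \sum_(l | (lab l == x) && absorbing P l) alive pi P s th t.+1 l.
Proof.
rewrite alive_pars_succ => [|i]; last exact: alive_pars_nonabsorbing.
congr (_ + _); last by apply: eq_bigl => l; rewrite route_target andbC.
rewrite [RHS]big_mkcondl [LHS]big_mkcond [RHS]big_mkcond /=; apply: eq_bigr => i _.
rewrite target_inj eq_sym; case: (lab i == x); case: (absorbing P i) => /=; ring.
Qed.

Lemma series_alive_pars_target th x N :
  \sum_(t < N) \sum_(i | lab i == x) alive pi P s th t i * stopw P s th i +
  \sum_(l | (lab l == x) && absorbing P l) alive pi P s th N l =
  \sum_(t < N.+1) alive pi P' zs th t (target x).
Proof.
elim: N => [|N IH]; first by rewrite big_ord0 add0r big_ord1 alive_pars_target0.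
rewrite big_ord_recr [in RHS]big_ord_recr -IH alive_pars_target_succ.
rewrite (bigID (@absorbing _ _ _ P) (fun i => lab i == x)) /=.
have -> : \sum_(i | (lab i == x) && absorbing P i)
      alive pi P s th N i * stopw P s th i =
    \sum_(i | (lab i == x) && absorbing P i) alive pi P s th N i.
  by apply: eq_bigr => i /andP[_ Pi]; rewrite /stopw Pi mulr1.
have -> : \sum_(i | (lab i == x) && ~~ absorbing P i)
      alive pi P s th N i * stopw P s th i =
    \sum_(i | (lab i == x) && ~~ absorbing P i) alive pi P s th N i * sig i.
  by apply: eq_bigr => i /andP[_ /negbTE Pi]; rewrite /stopw Pi.
ring.
Qed.

Lemma sum_endprob_le_pars th x :
  \sum_(i | lab i == x) endprob pi P s th i <= endprob pi P' zs th (target x).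
Proof.
have s_valid := stop_with_valid sig01.
have P'x : absorbing P' (target x) by rewrite pars_absorbing target_absorbing.
rewrite /endprob -rsum_sum => [|i]; last exact: nneg_summable_stopped_at.
rewrite {2}/stopw P'x (_ : (fun t => _ * 1) = alive pi P' zs th ^~ (target x)).
  2: by apply: funext => t; rewrite mulr1.
apply: (le_rsum_shift (k := 1)) => [||N].
- apply: nneg_summable_sum => i; exact: nneg_summable_stopped_at.
- exact (nneg_summable_alive_absorbing pars_valid (@never_stop_valid m) th P'x).
rewrite addn1 !series_ord -series_alive_pars_target lerDl.
by apply: sumr_ge0 => l _; exact: alive_ge0.
Qed.

End Parsimonize.

Lemma two_absorbing m (P : protocol R S m) : #|[set i | absorbing P i]%SET| = 2%N ->
  exists A B, [/\ absorbing P A, absorbing P B & A != B].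
Proof.
move=> /eqP /cards2P[A [B [AB PAB]]]; exists A, B; split=> //.
  by have := set21 A B; rewrite -PAB inE.
by have := set22 A B; rewrite -PAB inE.
Qed.

Section Comparison.
Variables (m : nat) (P : protocol R S m).
Hypothesis hP : valid_protocol P.
Variable p : R.
Hypothesis hp : 0 < p < 1.

Let p_ge0 : 0 <= p. Proof. by case/andP: hp => /ltW. Qed.
Let q_ge0 : 0 <= 1 - p. Proof. by case/andP: hp => _ /ltW; rewrite subr_ge0. Qed.

(* Best responses maximise the probability of action H state by state. *)
Lemma UR_le_mimic sg sg0 : best_response pi p P sg -> best_response pi p P sg0 ->
  UR pi p P sg <= p * probH pi P (stop_with (sg0^~ true)) true +
                  (1 - p) * (1 - probH pi P (stop_with (sg0^~ true)) false).
Proof.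
move=> sgbest sg0best; set s := stop_with _.
have vs : valid_strategy s by move=> i th; exact: sg0best.1.
have HT : probH pi P sg true <= probH pi P s true.
  rewrite (@probH_eq_state _ P s sg0 true) //.
  exact: best_response_probH true hp sg0best sgbest.1.
have HF : probH pi P s false <= probH pi P sg false.
  exact: best_response_probH false hp sgbest vs.
have LF : probL pi P sg false <= 1 - probH pi P sg false.
  rewrite /probL; under eq_bigr do rewrite mulrBr mulr1.
  by rewrite sumrB lerD2r; exact (sum_endprob_le1 hP sgbest.1 false).
by rewrite /UR lerD // ler_wpM2l // (le_trans LF) // lerB.
Qed.

Lemma mimic_le_verdict s : valid_strategy s -> \sum_i endprob pi P s false i = 1 ->
  p * probH pi P s true + (1 - p) * (1 - probH pi P s false) <=
  \sum_i (if (1 - p) * endprob pi P s false i <= p * endprob pi P s true i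
          then p * endprob pi P s true i else (1 - p) * endprob pi P s false i).
Proof.
move=> vs eF1.
have -> : 1 - probH pi P s false = \sum_i endprob pi P s false i * (1 - pact P i).
  by rewrite -{1}eF1 /probH -sumrB; apply: eq_bigr => i _; rewrite mulrBr mulr1.
rewrite /probH !mulr_sumr -big_split /=; apply: ler_sum => i _.
have /andP[a0 a1] := hP.2.2 i.
have eT0 := endprob_ge0 hP vs true i; have eF0 := endprob_ge0 hP vs false i.
by case: ifPn => [|/negP]; rewrite -?ltNge => verdict; nra.
Qed.

Lemma verdict_le_UR_pars A B (PA : absorbing P A) (PB : absorbing P B) (AB : A != B)
    sig (sig01 : forall i, 0 <= sig i <= 1) lab sg' :
  best_response pi p (pars_protocol P A B sig lab) sg' ->
  \sum_i (if lab i then p * endprob pi P (stop_with sig) true i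
          else (1 - p) * endprob pi P (stop_with sig) false i) <=
  UR pi p (pars_protocol P A B sig lab) sg'.
Proof.
set P' := pars_protocol P A B sig lab => sg'best.
have vP' : valid_protocol P' := pars_valid hP A B sig01 lab.
have P'B : absorbing P' B by rewrite pars_absorbing.
have zs_valid := @never_stop_valid m.
rewrite big_if /= -!mulr_sumr /UR lerD // ler_wpM2l //.
- apply: le_trans (best_response_probH true hp sg'best zs_valid).
  rewrite (eq_bigl (fun i => lab i == true)) => [|i]; last by case: (lab i).
  apply: le_trans (sum_endprob_le_pars hP PA PB AB sig01 lab true true) _.
  rewrite /probH (bigD1 B) //= eqxx mulr1 lerDl; apply: sumr_ge0 => i _.
  by rewrite mulr_ge0 ?ler0n ?(endprob_ge0 vP').
- apply: le_trans (probL_never_stop_le vP' P'B _ false sg'best.1) => //.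
  rewrite (eq_bigl (fun i => lab i == false)) => [|i]; last by case: (lab i).
  apply: le_trans (sum_endprob_le_pars hP PA PB AB sig01 lab false false) _.
  rewrite /probL (bigD1 A) //= (negbTE AB) subr0 mulr1 lerDl; apply: sumr_ge0 => i _.
  by rewrite mulr_ge0 ?(endprob_ge0 vP') // subr_ge0 lern1 leq_b1.
Qed.

Lemma pars_protocol_spec A B (PA : absorbing P A) (PB : absorbing P B) (AB : A != B)
    sig (sig01 : forall i, 0 <= sig i <= 1) lab :
  #|[set i | absorbing P i]%SET| = 2%N ->
  (forall i, ~~ absorbing P i -> transient pi P i) ->
  let P' := pars_protocol P A B sig lab in
  [/\ valid_protocol P', parsimonious pi P' & exists sg', best_response pi p P' sg'].
Proof.
move=> Pcard Ptr P'; have vP' : valid_protocol P' := pars_valid hP A B sig01 lab.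
split=> //; first exact: pars_parsimonious.
have P'B : absorbing P' B by rewrite pars_absorbing.
by exists (@never_stop m); exact (best_response_never_stop vP' P'B (fun i => erefl) hp).
Qed.

End Comparison.
End Protocols.

Theorem proposition2 (R : realType) (S : finType) (pi : bool -> S -> R)
    (p : R) (m : nat) (P : protocol R S m) :
  valid_env pi -> 0 < p < 1 ->
  valid_protocol P -> simple pi P -> ~ parsimonious pi P ->
  exists m' : nat, (m' <= m)%N /\
    exists P' : protocol R S m',
      valid_protocol P' /\ parsimonious pi P' /\
      (exists sg' : strategy R m', best_response pi p P' sg') /\
      (forall (sg : strategy R m) (sg' : strategy R m'),
          best_response pi p P sg -> best_response pi p P' sg' ->
          UR pi p P sg <= UR pi p P' sg').
Proof.
move=> env hp hP [Pcard Ptr] _; exists m; split=> //.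
have [A [B [PA PB AB]]] := two_absorbing Pcard.
have [[sg0 sg0best]|nobest] := pselect (exists sg, best_response pi p P sg); last first.
  have sig01 (i : 'I_m) : 0 <= (0 : R) <= 1 by rewrite lexx ler01.
  have [vP' parsP' bestP'] :=
    pars_protocol_spec env hP hp PA PB AB sig01 xpredT Pcard Ptr.
  exists (pars_protocol P A B (fun=> 0) xpredT); do 3 (split; first done).
  by move=> sg sg' sgbest; case: nobest; exists sg.
pose sig i := sg0 i true; have sig01 i : 0 <= sig i <= 1 by exact: sg0best.1.
pose e th := endprob pi P (stop_with sig) th.
pose lab i := (1 - p) * e false i <= p * e true i.
have [vP' parsP' bestP'] := pars_protocol_spec env hP hp PA PB AB sig01 lab Pcard Ptr.
exists (pars_protocol P A B sig lab); do 3 (split; first done).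
move=> sg sg' sgbest sg'best.
apply: le_trans (UR_le_mimic env hP hp sgbest sg0best) _.
apply: le_trans (verdict_le_UR_pars env hP hp PA PB AB sig01 sg'best).
have vs := stop_with_valid sig01.
apply: (mimic_le_verdict env hP p vs).
exact: (sum_endprob_transient env hP vs (fun j Pj => Ptr j Pj false)).
Qed.
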